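(* Let $K$ be a field and let $C=[A\xrightarrow{u}B]$, $C'=[A'\xrightarrow{u'}B']$ be complexes of commutative group schemes over $K$. Let $P$ be a biextension of $(B,B')$ by $\mathbb G_m$, and let $\Sigma:(A\times A')\times P\to P$ be an $A\times A'$-linearization of $P$. Suppose that $u(K):A(K)\to B(K)$ and $u'(K):A'(K)\to B'(K)$ are injective. Then $\Sigma$ induces a quotient biextension $Q(K)$ of $(B(K)/A(K),\,B'(K)/A'(K))$ by $K^*$; namely, the set $Q(K)$ of orbits $[x]=\{\Sigma(a,a',x): a\in A(K),a'\in A'(K)\}$ of elements $x\in P(K)$ carries, via the projection, $K^*$-action and partial group laws induced from $P(K)$, the structure of a biextension of $(B(K)/A(K),\,B'(K)/A'(K))$ by $K^*$.
   Context: Here $B(K)/A(K)$ means $B(K)/u(A(K))$ and similarly for $B'(K)/A'(K)$. For a biextension $P$ of $(B,B')$ by $\mathbb G_m$, $+_1$ denotes the group law on the fibers $P_{b,B'}$ over $\{b\}\times B'$ and $+_2$ the group law on the fibers $P_{B,b'}$ over $B\times\{b'\}$. Let $\sigma:A\times B\to B$, $(a,b)\mapsto u(a)+b$, and $\sigma':A'\times B'\to B'$, $(a',b')\mapsto u'(a')+b'$. An $A\times A'$-linearization of $P$ is an action $\Sigma:(A\times A')\times P\to P$ of the group $A\times A'$ on $P$ such that: (i) $\Sigma(a,a',c+x)=c+\Sigma(a,a',x)$ for $c\in\mathbb G_m$; (ii) if $x$ lies above $(b,b')$ then $\Sigma(a,a',x)$ lies above $(\sigma(a,b),\sigma'(a',b'))$;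 (iii) for $a\in A$, $a'_1,a'_2\in A'$ and $x_1,x_2$ above the same $b\in B$, $\Sigma(a,a'_1+a'_2,x_1+_1x_2)=\Sigma(a,a'_1,x_1)+_1\Sigma(a,a'_2,x_2)$, and for $a_1,a_2\in A$, $a'\in A'$ and $x_1,x_2$ above the same $b'\in B'$, $\Sigma(a_1+a_2,a',x_1+_2x_2)=\Sigma(a_1,a',x_1)+_2\Sigma(a_2,a',x_2)$. A biextension of abelian groups $(X,Y)$ by $H$ is a set $Q$ with a surjection onto $X\times Y$, a free $H$-action transitive on fibers, and partial group laws on the fibers over $\{x\}\times Y$ and over $X\times\{y\}$ making them extensions of $Y$ (resp. $X$) by $H$, compatible in the usual sense (Mumford/Grothendieck). *)

From HB Require Import structures.
From mathcomp Require Import all_boot all_order all_algebra.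
Set Implicit Arguments. Unset Strict Implicit. Unset Printing Implicit Defensive.
Import Order.TTheory GRing.Theory Num.Theory.
Local Open Scope ring_scope.

(* A biextension of the abelian groups (X, Y) by the multiplicative group
   K^* of a field K, in the sense of Mumford/Grothendieck:
   - bpr : Q -> X * Y a surjection,
   - bact c : action of c in K^* (only c != 0 is meaningful), free and
     transitive on the fibres of bpr,
   - badd1 : partial group law on the fibres over {x} x Y (only used on
     pairs with equal first projection), making each such fibre a
     commutative extension of Y by K^*,
   - badd2 : same on the fibres over X x {y},
   - the two partial laws are compatible. *)
Record biext (K : fieldType) (X Y : zmodType) (Q : Type) := Biext {
  bpr : Q -> X * Y;
  bact : K -> Q -> Q;
  badd1 : Q -> Q -> Q;
  badd2 : Q -> Q -> Q;
  bpr_surj : forall xy : X * Y, exists q, bpr q = xy;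
  bact_pr : forall c q, c != 0 -> bpr (bact c q) = bpr q;
  bact1 : forall q, bact 1 q = q;
  bactM : forall c d q, c != 0 -> d != 0 -> bact (c * d) q = bact c (bact d q);
  bact_free : forall c q, c != 0 -> bact c q = q -> c = 1;
  bact_trans : forall q q', bpr q = bpr q' -> exists2 c, c != 0 & q' = bact c q;
  badd1_pr : forall q1 q2, (bpr q1).1 = (bpr q2).1 ->
    bpr (badd1 q1 q2) = ((bpr q1).1, (bpr q1).2 + (bpr q2).2);
  badd1A : forall q1 q2 q3, (bpr q1).1 = (bpr q2).1 -> (bpr q2).1 = (bpr q3).1 ->
    badd1 q1 (badd1 q2 q3) = badd1 (badd1 q1 q2) q3;
  badd1C : forall q1 q2, (bpr q1).1 = (bpr q2).1 -> badd1 q1 q2 = badd1 q2 q1;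
  badd1_unit : forall x : X, exists e, bpr e = (x, 0) /\
    forall q, (bpr q).1 = x ->
      badd1 e q = q /\ exists2 q', (bpr q').1 = x & badd1 q q' = e;
  badd1_act : forall c q1 q2, c != 0 -> (bpr q1).1 = (bpr q2).1 ->
    badd1 (bact c q1) q2 = bact c (badd1 q1 q2);
  badd2_pr : forall q1 q2, (bpr q1).2 = (bpr q2).2 ->
    bpr (badd2 q1 q2) = ((bpr q1).1 + (bpr q2).1, (bpr q1).2);
  badd2A : forall q1 q2 q3, (bpr q1).2 = (bpr q2).2 -> (bpr q2).2 = (bpr q3).2 ->
    badd2 q1 (badd2 q2 q3) = badd2 (badd2 q1 q2) q3;
  badd2C : forall q1 q2, (bpr q1).2 = (bpr q2).2 -> badd2 q1 q2 = badd2 q2 q1;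
  badd2_unit : forall y : Y, exists e, bpr e = (0, y) /\
    forall q, (bpr q).2 = y ->
      badd2 e q = q /\ exists2 q', (bpr q').2 = y & badd2 q q' = e;
  badd2_act : forall c q1 q2, c != 0 -> (bpr q1).2 = (bpr q2).2 ->
    badd2 (bact c q1) q2 = bact c (badd2 q1 q2);
  badd_compat : forall q11 q12 q21 q22,
    (bpr q11).1 = (bpr q12).1 -> (bpr q21).1 = (bpr q22).1 ->
    (bpr q11).2 = (bpr q21).2 -> (bpr q12).2 = (bpr q22).2 ->
    badd2 (badd1 q11 q12) (badd1 q21 q22) = badd1 (badd2 q11 q21) (badd2 q12 q22)
}.

Definition linearization (K : fieldType) (A B A' B' : zmodType)
  (u : {additive A -> B}) (u' : {additive A' -> B'}) (P : Type)
  (E : biext K B B' P) (S : A -> A' -> P -> P) : Prop :=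
  (forall x, S 0 0 x = x) /\
  (forall a1 a2 a1' a2' x, S (a1 + a2) (a1' + a2') x = S a1 a1' (S a2 a2' x)) /\
  (forall a a' c x, c != 0 -> S a a' (bact E c x) = bact E c (S a a' x)) /\
  (forall a a' x, bpr E (S a a' x) = (u a + (bpr E x).1, u' a' + (bpr E x).2)) /\
  (forall a a'1 a'2 x1 x2, (bpr E x1).1 = (bpr E x2).1 ->
     S a (a'1 + a'2) (badd1 E x1 x2) = badd1 E (S a a'1 x1) (S a a'2 x2)) /\
  (forall a1 a2 a' x1 x2, (bpr E x1).2 = (bpr E x2).2 ->
     S (a1 + a2) a' (badd2 E x1 x2) = badd2 E (S a1 a' x1) (S a2 a' x2)).

Definition orbitS (A A' P : Type) (S : A -> A' -> P -> P) (x : P) : P -> Prop :=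
  fun y => exists a a', y = S a a' x.

Definition orbits (A A' P : Type) (S : A -> A' -> P -> P) : Type :=
  { O : P -> Prop | exists x, O = orbitS S x }.

Definition orbit_of (A A' P : Type) (S : A -> A' -> P -> P) (x : P) : orbits S :=
  exist _ (orbitS S x) (ex_intro _ x erefl).

From HB Require Import structures.
From mathcomp Require Import all_boot all_order all_algebra.
From Stdlib Require Import ProofIrrelevance FunctionalExtensionality.
From Stdlib Require Import PropExtensionality ClassicalEpsilon.
Set Implicit Arguments. Unset Strict Implicit.
Import GRing.Theory.
Local Open Scope ring_scope.

(* Injectivity of u and u' is what makes the partial laws descend: if x1, x2
   lie over the same point of B and so do S a1 a1' x1 and S a2 a2' x2, then
   u a1 = u a2, hence a1 = a2, and by (iii) the sum of the moved points is
   S a1 (a1' + a2') (x1 +_1 x2), which lies in the orbit of x1 +_1 x2.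
   Conversely, two orbits whose images agree in B/A have representatives over
   the same point of B (move one of them by u(A)), so each biextension axiom
   of the quotient is the corresponding axiom of P at suitable
   representatives. *)

Section Orbits.

Variables (A A' : zmodType) (P : Type) (S : A -> A' -> P -> P).

Local Notation orbit := (orbit_of S).

Lemma orbitsW (Pr : orbits S -> Prop) :
  (forall x, Pr (orbit x)) -> forall O, Pr O.
Proof. by move=> Pr_orbit [O [x ex]]; subst O; apply: Pr_orbit. Qed.

Hypothesis S0 : forall x, S 0 0 x = x.
Hypothesis SD : forall a1 a2 a1' a2' x,
  S (a1 + a2) (a1' + a2') x = S a1 a1' (S a2 a2' x).

Lemma orbit_of_act a a' x : orbit (S a a' x) = orbit x.
Proof.
apply: eq_sig_hprop => [O p1 p2|]; first exact: proof_irrelevance.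
apply: functional_extensionality => y; apply: propositional_extensionality.
split=> -[b [b' ->]].
- by exists (b + a), (b' + a'); rewrite SD.
- by exists (b - a), (b' - a'); rewrite -SD !subrK.
Qed.

Lemma orbit_of_eq_act x y : orbit x = orbit y -> exists a a', y = S a a' x.
Proof.
move=> /(congr1 (@proj1_sig _ _)) /= exy.
have : orbitS S y y by exists 0, 0; rewrite S0.
by rewrite -exy.
Qed.

Definition orbit_repr (O : orbits S) : P :=
  sval (constructive_indefinite_description _ (svalP O)).

Lemma orbit_reprK O : orbit (orbit_repr O) = O.
Proof.
apply: eq_sig_hprop => [O' p1 p2|]; first exact: proof_irrelevance.
by rewrite /orbit_repr; case: constructive_indefinite_description.
Qed.

Definition quot_fun (T : Type) (f : P -> T) (O : orbits S) : T :=
  f (orbit_repr O).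

Lemma quot_fun_orbit (T : Type) (f : P -> T) :
  (forall a a' x, f (S a a' x) = f x) -> forall x, quot_fun f (orbit x) = f x.
Proof.
move=> f_inv x; have [a [a' {2}->]] := orbit_of_eq_act (orbit_reprK (orbit x)).
by rewrite f_inv.
Qed.

(* The value on two orbits is taken at representatives related by R; junk if
   there are none. *)
Definition quot_law (R : P -> P -> Prop) (op : P -> P -> P)
  (O1 O2 : orbits S) : orbits S :=
  epsilon (inhabits O1) (fun O => exists x1 x2,
    [/\ R x1 x2, orbit x1 = O1, orbit x2 = O2 & O = orbit (op x1 x2)]).

Lemma quot_law_orbit (R : P -> P -> Prop) (op : P -> P -> P) :
  (forall a1 a1' a2 a2' x1 x2, R x1 x2 -> R (S a1 a1' x1) (S a2 a2' x2) ->
     orbit (op (S a1 a1' x1) (S a2 a2' x2)) = orbit (op x1 x2)) ->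
  forall x1 x2, R x1 x2 -> quot_law R op (orbit x1) (orbit x2) = orbit (op x1 x2).
Proof.
move=> op_inv x1 x2 Rx; rewrite /quot_law; set Q := fun O => _.
have : Q (epsilon (inhabits (orbit x1)) Q).
  by apply: epsilon_spec; exists (orbit (op x1 x2)), x1, x2.
case=> y1 [y2 [Ry /esym/orbit_of_eq_act[a1 [a1' ey1]]
                  /esym/orbit_of_eq_act[a2 [a2' ey2]] ->]].
by subst y1 y2; apply: op_inv Rx Ry.
Qed.

End Orbits.

Section QuotientBiext.

Variables (K : fieldType) (A B A' B' : zmodType).
Variables (u : {additive A -> B}) (u' : {additive A' -> B'}).
Variables (P : Type) (E : biext K B B' P) (S : A -> A' -> P -> P).
Hypothesis S_lin : linearization u u' E S.
Hypotheses (u_inj : injective u) (u'_inj : injective u').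

Local Notation orbit := (orbit_of S).
Local Notation pr := (bpr E).

Let S0 : forall x, S 0 0 x = x. Proof. by case: S_lin. Qed.
Let SD : forall a1 a2 a1' a2' x,
  S (a1 + a2) (a1' + a2') x = S a1 a1' (S a2 a2' x).
Proof. by case: S_lin => _ []. Qed.
Let S_bact : forall a a' c x, c != 0 ->
  S a a' (bact E c x) = bact E c (S a a' x).
Proof. by case: S_lin => _ [_ []]. Qed.
Let S_bpr : forall a a' x,
  pr (S a a' x) = (u a + (pr x).1, u' a' + (pr x).2).
Proof. by case: S_lin => _ [_ [_ []]]. Qed.
Let S_badd1 : forall a a'1 a'2 x1 x2, (pr x1).1 = (pr x2).1 ->
  S a (a'1 + a'2) (badd1 E x1 x2) = badd1 E (S a a'1 x1) (S a a'2 x2).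
Proof. by case: S_lin => _ [_ [_ [_ []]]]. Qed.
Let S_badd2 : forall a1 a2 a' x1 x2, (pr x1).2 = (pr x2).2 ->
  S (a1 + a2) a' (badd2 E x1 x2) = badd2 E (S a1 a' x1) (S a2 a' x2).
Proof. by case: S_lin => _ [_ [_ [_ []]]]. Qed.

Lemma bpr_S_fixed a a' x : pr (S a a' x) = pr x -> a = 0 /\ a' = 0.
Proof.
rewrite S_bpr [RHS]surjective_pairing => -[ea ea'].
split; [apply: u_inj | apply: u'_inj]; rewrite raddf0.
  by apply: (@addIr _ (pr x).1); rewrite add0r.
by apply: (@addIr _ (pr x).2); rewrite add0r.
Qed.

Definition quot_bact (c : K) : orbits S -> orbits S :=
  quot_fun (fun x => orbit (bact E c x)).
Definition quot_badd1 : orbits S -> orbits S -> orbits S :=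
  quot_law (fun x1 x2 => (pr x1).1 = (pr x2).1) (badd1 E).
Definition quot_badd2 : orbits S -> orbits S -> orbits S :=
  quot_law (fun x1 x2 => (pr x1).2 = (pr x2).2) (badd2 E).

Lemma quot_bact_orbit c x :
  c != 0 -> quot_bact c (orbit x) = orbit (bact E c x).
Proof.
move=> c0; apply: (quot_fun_orbit S0) => a a' {}x.
by rewrite -S_bact // orbit_of_act.
Qed.

Lemma quot_badd1_orbit x1 x2 : (pr x1).1 = (pr x2).1 ->
  quot_badd1 (orbit x1) (orbit x2) = orbit (badd1 E x1 x2).
Proof.
apply: (quot_law_orbit S0) => a1 a1' a2 a2' {}x1 {}x2 e.
rewrite !S_bpr /= e => /addIr/u_inj <-.
by rewrite -S_badd1 // orbit_of_act.
Qed.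

Lemma quot_badd2_orbit x1 x2 : (pr x1).2 = (pr x2).2 ->
  quot_badd2 (orbit x1) (orbit x2) = orbit (badd2 E x1 x2).
Proof.
apply: (quot_law_orbit S0) => a1 a1' a2 a2' {}x1 {}x2 e.
rewrite !S_bpr /= e => /addIr/u'_inj <-.
by rewrite -S_badd2 // orbit_of_act.
Qed.

Variables (X X' : zmodType) (q : {additive B -> X}) (q' : {additive B' -> X'}).
Hypotheses (q_surj : forall x : X, exists b, q b = x)
           (q_ker : forall b, q b = 0 <-> exists a, b = u a)
           (q'_surj : forall x : X', exists b, q' b = x)
           (q'_ker : forall b, q' b = 0 <-> exists a, b = u' a).

Definition qbpr (x : P) : X * X' := (q (pr x).1, q' (pr x).2).

Definition quot_bpr : orbits S -> X * X' := quot_fun qbpr.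

Lemma quot_bpr_orbit x : quot_bpr (orbit x) = qbpr x.
Proof.
apply: (quot_fun_orbit S0) => a a' {}x; rewrite /qbpr S_bpr /= !raddfD.
have /q_ker-> : exists a0, u a = u a0 by exists a.
have /q'_ker-> : exists a0, u' a' = u' a0 by exists a'.
by rewrite !add0r.
Qed.

Lemma orbit_lift x b b' : q b = q (pr x).1 -> q' b' = q' (pr x).2 ->
  exists2 y, orbit y = orbit x & pr y = (b, b').
Proof.
move=> eb eb'.
have [a ea] : exists a, b - (pr x).1 = u a.
  by apply/q_ker; rewrite raddfB eb subrr.
have [a' ea'] : exists a', b' - (pr x).2 = u' a'.
  by apply/q'_ker; rewrite raddfB eb' subrr.
by exists (S a a' x); rewrite ?(orbit_of_act SD) // S_bpr -ea -ea' !subrK.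
Qed.

Lemma quot_bpr_surj xy : exists O, quot_bpr O = xy.
Proof.
case: xy => x x'; have [b <-] := q_surj x; have [b' <-] := q'_surj x'.
have [y py] := bpr_surj E (b, b').
by exists (orbit y); rewrite quot_bpr_orbit /qbpr py.
Qed.

Lemma quot_bact_pr c O : c != 0 -> quot_bpr (quot_bact c O) = quot_bpr O.
Proof.
move=> c0; elim/orbitsW: O => x.
by rewrite quot_bact_orbit // !quot_bpr_orbit /qbpr bact_pr.
Qed.

Lemma quot_bact1 O : quot_bact 1 O = O.
Proof. by elim/orbitsW: O => x; rewrite quot_bact_orbit ?oner_neq0 // bact1. Qed.

Lemma quot_bactM c d O : c != 0 -> d != 0 ->
  quot_bact (c * d) O = quot_bact c (quot_bact d O).
Proof.
move=> c0 d0; elim/orbitsW: O => x.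
by rewrite !quot_bact_orbit ?mulf_neq0 // bactM.
Qed.

Lemma quot_bact_free c O : c != 0 -> quot_bact c O = O -> c = 1.
Proof.
move=> c0; elim/orbitsW: O => x.
rewrite quot_bact_orbit // => /esym/(orbit_of_eq_act S0)[a [a' ex]].
have [a0 a'0] : a = 0 /\ a' = 0.
  by apply: (@bpr_S_fixed _ _ x); rewrite -ex bact_pr.
by rewrite a0 a'0 S0 in ex; apply: bact_free ex.
Qed.

Lemma quot_bact_trans O O' :
  quot_bpr O = quot_bpr O' -> exists2 c, c != 0 & O' = quot_bact c O.
Proof.
elim/orbitsW: O => x; elim/orbitsW: O' => y.
rewrite !quot_bpr_orbit => -[e1 e2].
have [z <- pz] := orbit_lift e1 e2.
have [c c0 ->] : exists2 c, c != 0 & z = bact E c x.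
  by apply: bact_trans; rewrite pz -surjective_pairing.
by exists c; rewrite // quot_bact_orbit.
Qed.

Lemma quot_badd1_pr O1 O2 : (quot_bpr O1).1 = (quot_bpr O2).1 ->
  quot_bpr (quot_badd1 O1 O2) =
    ((quot_bpr O1).1, (quot_bpr O1).2 + (quot_bpr O2).2).
Proof.
elim/orbitsW: O1 => x1; elim/orbitsW: O2 => x2.
rewrite !quot_bpr_orbit /= => e.
have [y2 <- py2] := orbit_lift e (erefl (q' (pr x2).2)).
rewrite quot_badd1_orbit ?py2 // quot_bpr_orbit /qbpr.
by rewrite badd1_pr ?py2 //= raddfD.
Qed.

Lemma quot_badd2_pr O1 O2 : (quot_bpr O1).2 = (quot_bpr O2).2 ->
  quot_bpr (quot_badd2 O1 O2) =
    ((quot_bpr O1).1 + (quot_bpr O2).1, (quot_bpr O1).2).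
Proof.
elim/orbitsW: O1 => x1; elim/orbitsW: O2 => x2.
rewrite !quot_bpr_orbit /= => e.
have [y2 <- py2] := orbit_lift (erefl (q (pr x2).1)) e.
rewrite quot_badd2_orbit ?py2 // quot_bpr_orbit /qbpr.
by rewrite badd2_pr ?py2 //= raddfD.
Qed.

Lemma quot_badd1A O1 O2 O3 :
  (quot_bpr O1).1 = (quot_bpr O2).1 -> (quot_bpr O2).1 = (quot_bpr O3).1 ->
  quot_badd1 O1 (quot_badd1 O2 O3) = quot_badd1 (quot_badd1 O1 O2) O3.
Proof.
elim/orbitsW: O1 => x1; elim/orbitsW: O2 => x2; elim/orbitsW: O3 => x3.
rewrite !quot_bpr_orbit /= => e12 e23.
have [y2 <- py2] := orbit_lift e12 (erefl (q' (pr x2).2)).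
have [y3 <- py3] := orbit_lift (etrans e12 e23) (erefl (q' (pr x3).2)).
have e2 : (pr x1).1 = (pr y2).1 by rewrite py2.
have e3 : (pr y2).1 = (pr y3).1 by rewrite py2 py3.
have e2_3 : (pr x1).1 = (pr (badd1 E y2 y3)).1 by rewrite badd1_pr.
have e12_3 : (pr (badd1 E x1 y2)).1 = (pr y3).1 by rewrite badd1_pr //= e2.
rewrite (quot_badd1_orbit e2) (quot_badd1_orbit e3).
by rewrite (quot_badd1_orbit e2_3) (quot_badd1_orbit e12_3) badd1A.
Qed.

Lemma quot_badd2A O1 O2 O3 :
  (quot_bpr O1).2 = (quot_bpr O2).2 -> (quot_bpr O2).2 = (quot_bpr O3).2 ->
  quot_badd2 O1 (quot_badd2 O2 O3) = quot_badd2 (quot_badd2 O1 O2) O3.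
Proof.
elim/orbitsW: O1 => x1; elim/orbitsW: O2 => x2; elim/orbitsW: O3 => x3.
rewrite !quot_bpr_orbit /= => e12 e23.
have [y2 <- py2] := orbit_lift (erefl (q (pr x2).1)) e12.
have [y3 <- py3] := orbit_lift (erefl (q (pr x3).1)) (etrans e12 e23).
have e2 : (pr x1).2 = (pr y2).2 by rewrite py2.
have e3 : (pr y2).2 = (pr y3).2 by rewrite py2 py3.
have e2_3 : (pr x1).2 = (pr (badd2 E y2 y3)).2 by rewrite badd2_pr.
have e12_3 : (pr (badd2 E x1 y2)).2 = (pr y3).2 by rewrite badd2_pr //= e2.
rewrite (quot_badd2_orbit e2) (quot_badd2_orbit e3).
by rewrite (quot_badd2_orbit e2_3) (quot_badd2_orbit e12_3) badd2A.
Qed.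

Lemma quot_badd1C O1 O2 :
  (quot_bpr O1).1 = (quot_bpr O2).1 -> quot_badd1 O1 O2 = quot_badd1 O2 O1.
Proof.
elim/orbitsW: O1 => x1; elim/orbitsW: O2 => x2.
rewrite !quot_bpr_orbit /= => e.
have [y2 <- py2] := orbit_lift e (erefl (q' (pr x2).2)).
by rewrite !quot_badd1_orbit ?py2 // badd1C ?py2.
Qed.

Lemma quot_badd2C O1 O2 :
  (quot_bpr O1).2 = (quot_bpr O2).2 -> quot_badd2 O1 O2 = quot_badd2 O2 O1.
Proof.
elim/orbitsW: O1 => x1; elim/orbitsW: O2 => x2.
rewrite !quot_bpr_orbit /= => e.
have [y2 <- py2] := orbit_lift (erefl (q (pr x2).1)) e.
by rewrite !quot_badd2_orbit ?py2 // badd2C ?py2.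
Qed.

Lemma quot_badd1_unit x : exists e, quot_bpr e = (x, 0) /\
  forall O, (quot_bpr O).1 = x ->
    quot_badd1 e O = O /\ exists2 O', (quot_bpr O').1 = x & quot_badd1 O O' = e.
Proof.
have [b <-] := q_surj x; have [e [pe e_unit]] := badd1_unit E b.
exists (orbit e); split; first by rewrite quot_bpr_orbit /qbpr pe raddf0.
elim/orbitsW => y; rewrite quot_bpr_orbit /= => ey.
have [z <- pz] := orbit_lift (esym ey) (erefl (q' (pr y).2)).
have pz1 : (pr z).1 = b by rewrite pz.
have [ez [z' pz' zz']] := e_unit z pz1.
split; first by rewrite quot_badd1_orbit ?ez // pe pz.
have fib_z' : (quot_bpr (orbit z')).1 = q b by rewrite quot_bpr_orbit /= pz'.
by exists (orbit z') => //; rewrite quot_badd1_orbit ?zz' // pz pz'.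
Qed.

Lemma quot_badd2_unit x : exists e, quot_bpr e = (0, x) /\
  forall O, (quot_bpr O).2 = x ->
    quot_badd2 e O = O /\ exists2 O', (quot_bpr O').2 = x & quot_badd2 O O' = e.
Proof.
have [b <-] := q'_surj x; have [e [pe e_unit]] := badd2_unit E b.
exists (orbit e); split; first by rewrite quot_bpr_orbit /qbpr pe raddf0.
elim/orbitsW => y; rewrite quot_bpr_orbit /= => ey.
have [z <- pz] := orbit_lift (erefl (q (pr y).1)) (esym ey).
have pz2 : (pr z).2 = b by rewrite pz.
have [ez [z' pz' zz']] := e_unit z pz2.
split; first by rewrite quot_badd2_orbit ?ez // pe pz.
have fib_z' : (quot_bpr (orbit z')).2 = q' b by rewrite quot_bpr_orbit /= pz'.
by exists (orbit z') => //; rewrite quot_badd2_orbit ?zz' // pz pz'.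
Qed.

Lemma quot_badd1_act c O1 O2 : c != 0 -> (quot_bpr O1).1 = (quot_bpr O2).1 ->
  quot_badd1 (quot_bact c O1) O2 = quot_bact c (quot_badd1 O1 O2).
Proof.
move=> c0; elim/orbitsW: O1 => x1; elim/orbitsW: O2 => x2.
rewrite !quot_bpr_orbit /= => e.
have [y2 <- py2] := orbit_lift e (erefl (q' (pr x2).2)).
have e2 : (pr x1).1 = (pr y2).1 by rewrite py2.
rewrite quot_bact_orbit // !quot_badd1_orbit ?bact_pr // quot_bact_orbit //.
by rewrite badd1_act.
Qed.

Lemma quot_badd2_act c O1 O2 : c != 0 -> (quot_bpr O1).2 = (quot_bpr O2).2 ->
  quot_badd2 (quot_bact c O1) O2 = quot_bact c (quot_badd2 O1 O2).
Proof.
move=> c0; elim/orbitsW: O1 => x1; elim/orbitsW: O2 => x2.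
rewrite !quot_bpr_orbit /= => e.
have [y2 <- py2] := orbit_lift (erefl (q (pr x2).1)) e.
have e2 : (pr x1).2 = (pr y2).2 by rewrite py2.
rewrite quot_bact_orbit // !quot_badd2_orbit ?bact_pr // quot_bact_orbit //.
by rewrite badd2_act.
Qed.

Lemma quot_badd_compat O11 O12 O21 O22 :
  (quot_bpr O11).1 = (quot_bpr O12).1 -> (quot_bpr O21).1 = (quot_bpr O22).1 ->
  (quot_bpr O11).2 = (quot_bpr O21).2 -> (quot_bpr O12).2 = (quot_bpr O22).2 ->
  quot_badd2 (quot_badd1 O11 O12) (quot_badd1 O21 O22) =
    quot_badd1 (quot_badd2 O11 O21) (quot_badd2 O12 O22).
Proof.
elim/orbitsW: O11 => x11; elim/orbitsW: O12 => x12.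
elim/orbitsW: O21 => x21; elim/orbitsW: O22 => x22.
rewrite !quot_bpr_orbit /= => e1 e2 e3 e4.
have [y12 <- py12] := orbit_lift e1 (erefl (q' (pr x12).2)).
have [y21 <- py21] := orbit_lift (erefl (q (pr x21).1)) e3.
have [y22 <- py22] := orbit_lift e2 e4.
have f1 : (pr x11).1 = (pr y12).1 by rewrite py12.
have f2 : (pr y21).1 = (pr y22).1 by rewrite py21 py22.
have f3 : (pr x11).2 = (pr y21).2 by rewrite py21.
have f4 : (pr y12).2 = (pr y22).2 by rewrite py12 py22.
have f12 : (pr (badd1 E x11 y12)).2 = (pr (badd1 E y21 y22)).2.
  by rewrite !badd1_pr //= f3 f4.
have f34 : (pr (badd2 E x11 y21)).1 = (pr (badd2 E y12 y22)).1.
  by rewrite !badd2_pr //= f1 f2.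
rewrite (quot_badd1_orbit f1) (quot_badd1_orbit f2).
rewrite (quot_badd2_orbit f3) (quot_badd2_orbit f4).
by rewrite (quot_badd2_orbit f12) (quot_badd1_orbit f34) badd_compat.
Qed.

Definition quotient_biext : biext K X X' (orbits S) :=
  Biext quot_bpr_surj quot_bact_pr quot_bact1 quot_bactM quot_bact_free
    quot_bact_trans
    quot_badd1_pr quot_badd1A quot_badd1C quot_badd1_unit quot_badd1_act
    quot_badd2_pr quot_badd2A quot_badd2C quot_badd2_unit quot_badd2_act
    quot_badd_compat.

End QuotientBiext.

Theorem proposition3p4
  (K : fieldType) (A B A' B' : zmodType)
  (u : {additive A -> B}) (u' : {additive A' -> B'})
  (P : Type) (E : biext K B B' P) (S : A -> A' -> P -> P)
  (* B(K)/A(K) and B'(K)/A'(K), given as cokernels of u and u' *)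
  (X X' : zmodType) (q : {additive B -> X}) (q' : {additive B' -> X'})
  (hq_surj : forall x : X, exists b, q b = x)
  (hq_ker : forall b, q b = 0 <-> exists a, b = u a)
  (hq'_surj : forall x : X', exists b, q' b = x)
  (hq'_ker : forall b, q' b = 0 <-> exists a, b = u' a) :
  linearization u u' E S ->
  injective u -> injective u' ->
  exists F : biext K X X' (orbits S),
    (forall x, bpr F (orbit_of S x) = (q (bpr E x).1, q' (bpr E x).2)) /\
    (forall c x, c != 0 -> bact F c (orbit_of S x) = orbit_of S (bact E c x)) /\
    (forall x1 x2, (bpr E x1).1 = (bpr E x2).1 ->
       badd1 F (orbit_of S x1) (orbit_of S x2) = orbit_of S (badd1 E x1 x2)) /\
    (forall x1 x2, (bpr E x1).2 = (bpr E x2).2 ->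
       badd2 F (orbit_of S x1) (orbit_of S x2) = orbit_of S (badd2 E x1 x2)).
Proof.
move=> S_lin u_inj u'_inj.
exists (quotient_biext S_lin u_inj u'_inj hq_surj hq_ker hq'_surj hq'_ker).
split; first exact (quot_bpr_orbit S_lin hq_ker hq'_ker).
split; first exact: quot_bact_orbit S_lin.
split; first exact: quot_badd1_orbit S_lin u_inj.
exact: quot_badd2_orbit S_lin u'_inj.
Qed.
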